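(* Let $n\ge 4$ and let $G'_n$ be the directed graph with nodes $0,\dots,n-1$ and arcs: $i\to i+1$ for $0\le i\le n-5$; $(n-4)\to(n-3)$; $(n-4)\to(n-1)$; $(n-1)\to(n-2)$; $(n-2)\to(n-1)$; and $j\to 0$ for every $1\le j\le n-1$. For $\pi\in S_n$, the following are equivalent: (1) $\pi\in\mathcal P_n$; (2) $\pi$ is representable by $G'_n$.
   Context: $d_G(x,y)$ is the shortest directed path length from $x$ to $y$ ($\infty$ if none). The distance-count matrix $C_G\in\mathbb{R}^{n\times n}$ has $(C_G)_{i,k}=|\{j: d_G(j,i)=k\}|$. For $\mathbf a\in\mathbb{R}^{\mathbb{N}}$ (with $a_0$ arbitrary) the linear centrality is $f^{\mathbf a}_G(i)=\sum_{k=0}^{n-1}(C_G)_{i,k}a_k$. A permutation $\pi$ of $\{0,\dots,n-1\}$ is representable by $G$ if there is $\mathbf a$ with $f^{\mathbf a}_G(\pi(0))>f^{\mathbf a}_G(\pi(1))>\dots>f^{\mathbf a}_G(\pi(n-1))$. $\mathcal P_n$ is the set of permutations $\pi$ such that, with $\rho=\pi^{-1}$, one of: (1) $2\le\rho(n-1)\le n-3$; (2) $\rho(n-1)=1$ and $\rho(n-2)\ne0$; (3) $\rho(n-1)=n-2$ and $\rho(n-2)\ne n-1$. *)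

From HB Require Import structures.
From mathcomp Require Import all_boot all_order all_algebra all_fingroup.
From mathcomp Require Import Rstruct.
Set Implicit Arguments. Unset Strict Implicit. Unset Printing Implicit Defensive.
Import Order.TTheory GRing.Theory Num.Theory.

Fixpoint walk (T : finType) (e : rel T) (k : nat) (x y : T) : bool :=
  if k is k'.+1 then [exists z, e x z && walk e k' z y] else x == y.

Definition dist_is (T : finType) (e : rel T) (x y : T) (k : nat) : bool :=
  walk e k x y && [forall m : 'I_k, ~~ walk e m x y].

Definition distC (n : nat) (e : rel 'I_n) (i : 'I_n) (k : nat) : nat :=
  #|[set j : 'I_n | dist_is e j i k]|.

Definition lincent (n : nat) (e : rel 'I_n) (a : nat -> Rdefinitions.R) (i : 'I_n) : Rdefinitions.R :=
  (\sum_(k < n) (distC e i k)%:R * a k)%R.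

Definition representable (n : nat) (e : rel 'I_n) (p : {perm 'I_n}) : Prop :=
  exists a : nat -> Rdefinitions.R, forall s t : 'I_n, val t = (val s).+1 ->
    (lincent e a (p t) < lincent e a (p s))%R.

Definition inPn (n : nat) (p : {perm 'I_n}) : Prop :=
  forall x y : 'I_n, val x = n - 1 -> val y = n - 2 ->
    let r := val ((p^-1)%g x) in let s := val ((p^-1)%g y) in
    (2 <= r <= n - 3) \/ (r = 1 /\ s <> 0) \/ (r = n - 2 /\ s <> n - 1).

Definition Gprime (n : nat) : rel 'I_n := fun i j =>
  [|| ((i + 5 <= n) && (j == i + 1 :> nat)),
      ((i + 4 == n) && (j + 3 == n)),
      ((i + 4 == n) && (j + 1 == n)),
      ((i + 1 == n) && (j + 2 == n)),
      ((i + 2 == n) && (j + 1 == n))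
    | ((1 <= i) && (j == 0 :> nat))].

From mathcomp Require Import all_boot all_order all_algebra all_fingroup.
From mathcomp Require Import Rstruct zify ring lra.
Import Order.TTheory GRing.Theory Num.Theory.
Set Implicit Arguments. Unset Strict Implicit. Unset Printing Implicit Defensive.

(* Write n = m + 4 and s_k = a_0 + ... + a_(k-1).  All distances in G'_n are explicit
   and give f(i) = (m+3-i) s_(i+2) - (m+2-i) s_(i+1) for i <= m+2, and
   f(m+3) = s_(m+3) + s_2 - s_1.  These forms telescope to
   f(m+3) = sum_(i <= m+1) w_i f(i) with w_0 = 1/(m+2), w_i = 1/((m+2-i)(m+3-i)),
   positive weights summing to 1; conversely f(0), ..., f(m+2) can be prescribed
   arbitrarily by solving a triangular system for s.  Hence a ranking is realisable
   iff node n-1 is ranked strictly between two of the nodes 0, ..., n-3, which unfolds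
   to P_n.  For such a ranking, a value function linear in the rank on each side of
   n-1, with the slope before n-1 tuned to make the weighted average vanish there,
   realises it. *)

Local Notation R := Rdefinitions.R.

Section ShortestPaths.
Variables (T : finType) (e : rel T) (y : T) (D : T -> nat).
Hypothesis D_target : D y = 0.
Hypothesis D_step : forall x, x != y -> exists2 z, e x z & D x = (D z).+1.
Hypothesis D_arc : forall x z, e x z -> D x <= (D z).+1.

Lemma walk_dist_le k x : walk e k x y -> D x <= k.
Proof.
elim: k x => [|k IHk] x /=; first by move/eqP->; rewrite D_target.
by case/existsP=> z /andP[/D_arc xz /IHk]; lia.
Qed.

Lemma walk_dist x : walk e (D x) x y.
Proof.
move Ed: (D x) => d; elim: d x Ed => [|d IHd] x Ed /=.
  by apply/eqP; case: (eqVneq x y) => // /D_step[z _]; rewrite Ed.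
case: (eqVneq x y) => [xy | /D_step[z xz Dz]]; first by rewrite xy D_target in Ed.
by apply/existsP; exists z; rewrite xz IHd //; lia.
Qed.

Lemma dist_isE x k : dist_is e x y k = (k == D x).
Proof.
apply/idP/eqP => [/andP[/walk_dist_le Dk /forallP noshorter] | ->].
  apply/eqP; rewrite eqn_leq Dk andbT leqNgt; apply/negP => Dlt.
  by have := noshorter (Ordinal Dlt); rewrite walk_dist.
rewrite /dist_is walk_dist; apply/forallP => j; apply/negP => /walk_dist_le.
by have := ltn_ord j; lia.
Qed.
End ShortestPaths.

Lemma lincent_dist n (e : rel 'I_n) (a : nat -> R) (i : 'I_n) (D : 'I_n -> nat) :
  (forall x k, dist_is e x i k = (k == D x)) -> (forall x, D x < n) ->
  lincent e a i = (\sum_(j < n) a (D j))%R.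
Proof.
move=> distE D_lt; rewrite /lincent /distC.
transitivity (\sum_(k < n) \sum_(j < n) (if k == D j :> nat then a k else 0))%R.
  apply: eq_bigr => k _; rewrite -big_mkcond /= sumr_const mulr_natl.
  by congr (_ *+ _)%R; apply: eq_card => j; rewrite inE distE.
rewrite exchange_big; apply: eq_bigr => j _.
rewrite (bigD1 (Ordinal (D_lt j))) //= eqxx big1 ?addr0 // => k kj.
by case: eqP => // kD; move: kj; rewrite -val_eqE /= kD eqxx.
Qed.

Section GraphGprime.
Variable m : nat.
Local Notation n := m.+4.

Definition distG (x y : nat) : nat :=
  if y <= m.+1 then (if x <= y then y - x else y.+1)
  else if x == y then 0
  else if m.+2 <= x then 1
  else if y == m.+2 then (if x <= m then m.+2 - x else m.+3)
  else (if x <= m then m.+1 - x else m.+2).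

Definition nextG (x y : nat) : nat :=
  if y <= m.+1 then (if x < y then x.+1 else 0)
  else if m.+2 <= x then y
  else if x < m then x.+1 else if x == m then m.+3 else 0.

Lemma distG_lt x y : x < n -> y < n -> distG x y < n.
Proof. by rewrite /distG => xn yn; repeat case: ifP => ?; lia. Qed.

Lemma distG_arc (x z y : 'I_n) : Gprime x z -> distG x y <= (distG z y).+1.
Proof.
rewrite /Gprime /distG; have := ltn_ord x; have := ltn_ord y; have := ltn_ord z.
by repeat case: ifP => ?; lia.
Qed.

Lemma distG_step (x y : 'I_n) : x != y ->
  exists2 z : 'I_n, Gprime x z & distG x y = (distG z y).+1.
Proof.
rewrite -val_eqE => xy; have := ltn_ord x; have := ltn_ord y => yn xn.
have next_lt : nextG x y < n by rewrite /nextG; repeat case: ifP => ?; lia.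
exists (Ordinal next_lt); move: xy; rewrite /Gprime /= /nextG;
  repeat case: ifP => ?; rewrite /distG /=; repeat case: ifP => ?; lia.
Qed.

Lemma dist_isG (x y : 'I_n) k : dist_is (@Gprime n) x y k = (k == distG x y).
Proof.
apply: (dist_isE (D := fun x : 'I_n => distG x y)) => [|{}x|u v]; last exact: distG_arc.
  by rewrite /distG; case: ifP; rewrite ?eqxx ?leqnn ?subnn //; lia.
exact: distG_step.
Qed.

Definition centrality (a : nat -> R) (y : nat) : R := (\sum_(j < n) a (distG j y))%R.

Lemma lincentG a (y : 'I_n) : lincent (@Gprime n) a y = centrality a y.
Proof. by apply: lincent_dist => [x k|x]; rewrite ?dist_isG ?distG_lt. Qed.
End GraphGprime.

Local Open Scope ring_scope.

Definition psum (a : nat -> R) (k : nat) : R := \sum_(0 <= j < k) a j.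

Lemma psum0 a : psum a 0 = 0.
Proof. by rewrite /psum big_geq. Qed.

Lemma psumS a k : psum a k.+1 = psum a k + a k.
Proof. by rewrite /psum big_nat_recr. Qed.

Lemma sum_rev_psum a c t : (t <= c.+1)%N ->
  \sum_(0 <= j < t) a (c - j)%N = psum a c.+1 - psum a (c.+1 - t).
Proof.
elim: t => [|t IHt] tc; first by rewrite big_geq // subn0 subrr.
rewrite big_nat_recr //= IHt 1?ltnW // subSS subSn // (psumS a (c - t)); ring.
Qed.

Section Centrality.
Variables (m : nat) (a : nat -> R).
Local Notation centrality := (centrality m a).

Lemma centrality_chain i : (i <= m.+1)%N ->
  centrality i = psum a i.+1 + (m.+3 - i)%:R * a i.+1.
Proof.
move=> im; rewrite /centrality -(big_mkord xpredT (fun j => a (distG m j i))).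
rewrite (big_cat_nat _ (n := i.+1)) //=; last lia.
rewrite (eq_big_nat _ _ (F2 := fun j => a (i - j)%N)) => [|j /andP[_ ji]]; last first.
  by rewrite /distG im ifT.
rewrite (eq_big_nat _ _ (m := i.+1) (F2 := fun=> a i.+1)) => [|j /andP[ij _]]; last first.
  by rewrite /distG im leqNgt ij.
by rewrite sum_rev_psum // subnn psum0 subr0 sumr_const_nat mulr_natl.
Qed.

Lemma centrality_penult : centrality m.+2 = psum a m.+4.
Proof.
rewrite /centrality 3!big_ord_recr /=.
rewrite (eq_bigr (fun j : 'I_m.+1 => a (m.+2 - j)%N)) => [|j _]; last first.
  by congr a; rewrite /distG /=; have := ltn_ord j; repeat case: ifP => ?; lia.
rewrite -(big_mkord xpredT (fun j => a (m.+2 - j)%N)) sum_rev_psum; last lia.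
have -> : distG m m.+1 m.+2 = m.+3 by rewrite /distG; repeat case: ifP => ?; lia.
have -> : distG m m.+2 m.+2 = 0%N by rewrite /distG; repeat case: ifP => ?; lia.
have -> : distG m m.+3 m.+2 = 1%N by rewrite /distG; repeat case: ifP => ?; lia.
have -> : (m.+3 - m.+1 = 2)%N by lia.
rewrite !psumS psum0; ring.
Qed.

Lemma centrality_last : centrality m.+3 = psum a m.+3 + a 1.
Proof.
rewrite /centrality 3!big_ord_recr /=.
rewrite (eq_bigr (fun j : 'I_m.+1 => a (m.+1 - j)%N)) => [|j _]; last first.
  by congr a; rewrite /distG /=; have := ltn_ord j; repeat case: ifP => ?; lia.
rewrite -(big_mkord xpredT (fun j => a (m.+1 - j)%N)) sum_rev_psum; last lia.
have -> : distG m m.+1 m.+3 = m.+2 by rewrite /distG; repeat case: ifP => ?; lia.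
have -> : distG m m.+2 m.+3 = 1%N by rewrite /distG; repeat case: ifP => ?; lia.
have -> : distG m m.+3 m.+3 = 0%N by rewrite /distG; repeat case: ifP => ?; lia.
have -> : (m.+2 - m.+1 = 1)%N by lia.
rewrite !psumS psum0; ring.
Qed.
End Centrality.

Section Weights.
Variable m : nat.

Definition weight (i : nat) : R :=
  if i is 0 then m.+2%:R^-1 else ((m.+2 - i) * (m.+3 - i))%:R^-1.

Lemma weight_ge0 i : 0 <= weight i.
Proof. by case: i => [|i]; rewrite invr_ge0 ler0n. Qed.

Lemma weight_gt0 i : (i <= m.+1)%N -> 0 < weight i.
Proof. by case: i => [|i] im; rewrite invr_gt0 ltr0n // muln_gt0; lia. Qed.

Lemma centrality_last_wavg a :
  centrality m a m.+3 = \sum_(0 <= i < m.+2) weight i * centrality m a i.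
Proof.
have chain i : (i <= m.+1)%N ->
    centrality m a i = (m.+3 - i)%:R * psum a i.+2 - (m.+2 - i)%:R * psum a i.+1.
  move=> im; rewrite centrality_chain // (psumS a i.+1).
  have -> : (m.+3 - i = (m.+2 - i).+1)%N by lia.
  by rewrite -natr1; ring.
rewrite big_ltn // (telescope_sumr_eq (fun k => psum a k.+1 / (m.+3 - k)%:R)) //; last first.
  case=> [//|k] /andP[_ km]; rewrite chain // /weight.
  have d0 : (0 < m.+2 - k.+1)%N by lia.
  have -> : (m.+3 - k.+1 = (m.+2 - k.+1).+1)%N by lia.
  have -> : (m.+3 - k.+2 = m.+2 - k.+1)%N by lia.
  move: d0; set d := (m.+2 - k.+1)%N => d0.
  have dR : d%:R != 0 :> R by rewrite pnatr_eq0 -lt0n.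
  by rewrite natrM -natr1; field; rewrite natr1 pnatr_eq0 dR.
have -> : (m.+3 - m.+2 = 1)%N by lia.
rewrite centrality_last chain // /weight !subn0 (psumS a 1) -!natr1.
by field; rewrite !natr1 pnatr_eq0.
Qed.

Lemma sum_weight : \sum_(0 <= i < m.+2) weight i = 1.
Proof.
pose a k : R := (k == 0%N)%:R.
have psum_a k : psum a k.+1 = 1.
  by elim: k => [|k IHk]; rewrite psumS ?psum0 ?IHk /a /= ?addr0 ?add0r.
have := centrality_last_wavg a.
rewrite centrality_last psum_a /a addr0 => ->.
apply: eq_big_nat => i /andP[_ im].
by rewrite centrality_chain // psum_a /a /= mulr0 addr0 mulr1.
Qed.

Lemma wavg_lt (u : nat -> R) c : (forall i, (i < m.+2)%N -> u i < c) ->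
  \sum_(0 <= i < m.+2) weight i * u i < c.
Proof.
move=> uc; rewrite -[c]mul1r -sum_weight mulr_suml.
by apply: ltr_sum_nat => // i /andP[_ im]; rewrite ltr_pM2l ?weight_gt0 ?uc.
Qed.

Lemma wavg_gt (u : nat -> R) c : (forall i, (i < m.+2)%N -> c < u i) ->
  c < \sum_(0 <= i < m.+2) weight i * u i.
Proof.
move=> cu; rewrite -[c]mul1r -sum_weight mulr_suml.
by apply: ltr_sum_nat => // i /andP[_ im]; rewrite ltr_pM2l ?weight_gt0 ?cu.
Qed.

Lemma wsum_nat_gt0 (u : nat -> nat) : (exists2 i, (i < m.+2)%N & (0 < u i)%N) ->
  0 < \sum_(0 <= i < m.+2) weight i * (u i)%:R.
Proof.
case=> j jm uj; have ge0 i : 0 <= weight i * (u i)%:R by rewrite mulr_ge0 ?weight_ge0.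
rewrite lt0r sumr_ge0 // andbT psumr_neq0 //; apply/hasP; exists j.
  by rewrite mem_index_iota.
by rewrite mulr_gt0 ?weight_gt0 ?ltr0n.
Qed.

Definition balanced (v : nat -> R) : Prop :=
  v m.+3 = \sum_(0 <= i < m.+2) weight i * v i.

End Weights.

Section Realization.
Variables (m : nat) (v : nat -> R).

(* Solves centrality i = v i for s_(i+2); at i = m+2 the truncated subtractions give
   s_(m+4) = v (m+2), as centrality_penult requires. *)
Fixpoint psum_sol (k : nat) : R :=
  if k is k1.+1 then
    if k1 is i.+1 then (v i + (m.+2 - i)%:R * psum_sol k1) / (m.+3 - i)%:R else 0
  else 0.

Lemma centrality_onto : exists a, forall i, (i <= m.+2)%N -> centrality m a i = v i.
Proof.
pose a k := psum_sol k.+1 - psum_sol k.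
have psum_a k : psum a k = psum_sol k.
  by rewrite /psum telescope_sumr // subr0.
exists a => i; rewrite leq_eqVlt => /orP[/eqP-> | im].
  rewrite centrality_penult psum_a /= subnn mul0r addr0.
  have -> : (m.+3 - m.+2 = 1)%N by lia.
  by rewrite divr1.
rewrite centrality_chain // psum_a /a /=.
have -> : (m.+3 - i = (m.+2 - i).+1)%N by lia.
by field; rewrite addrC natr1 pnatr_eq0.
Qed.

End Realization.

Lemma representableE m (p : {perm 'I_m.+4}) :
  representable (@Gprime m.+4) p <->
  exists2 v : nat -> R, balanced m v &
    forall s t : 'I_m.+4, t = s.+1 :> nat -> v (p t) < v (p s).
Proof.
split=> [[a dec] | [v bal dec]].
  exists (centrality m a); first exact: centrality_last_wavg.
  by move=> s t ts; rewrite -!lincentG; apply: dec.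
have [a av] := centrality_onto m v.
have lincent_v (x : 'I_m.+4) : lincent (@Gprime m.+4) a x = v x.
  rewrite lincentG; case: (ltnP x m.+3) => [xm | xm]; first exact: av.
  have -> : nat_of_ord x = m.+3 by have := ltn_ord x; lia.
  rewrite centrality_last_wavg bal; apply: eq_big_nat => i /andP[_ im].
  by rewrite av // ltnW.
by exists a => s t ts; rewrite !lincent_v; apply: dec.
Qed.

Lemma ord_decreasing n (g : 'I_n.+1 -> R) :
  (forall s t : 'I_n.+1, t = s.+1 :> nat -> g t < g s) ->
  forall s t : 'I_n.+1, (s < t)%N -> g t < g s.
Proof.
move=> succ s t st; rewrite -(inord_val s) -(inord_val t).
apply: (@Order.NatMonotonyTheory.nhomo_ltn_lt_in _ _ [pred k | (k < n.+1)%N]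
  (fun k => g (inord k))); rewrite ?inE //.
- by move=> i j _; rewrite !inE => jn k /andP[_ kj]; apply: ltn_trans jn.
- by move=> i; rewrite !inE => iSn in_; apply: succ; rewrite !inordK.
Qed.

(* The truncated subtractions make this lam (r - k) for k <= r and r - k for k >= r. *)
Definition ramp (lam : R) (r k : nat) : R := lam * (r - k)%:R - (k - r)%:R.

Lemma ramp_decreasing lam r k : 0 < lam -> ramp lam r k.+1 < ramp lam r k.
Proof.
move=> lam0; rewrite /ramp; case: (ltnP k r) => kr.
  have -> : (r - k = (r - k.+1).+1)%N by lia.
  have -> : (k.+1 - r = 0)%N by lia.
  have -> : (k - r = 0)%N by lia.
  by rewrite -natr1; lra.
have -> : (r - k.+1 = 0)%N by lia.
have -> : (r - k = 0)%N by lia.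
have -> : (k.+1 - r = (k - r).+1)%N by lia.
by rewrite -natr1; lra.
Qed.

Section Ranks.
Variables (m : nat) (p : {perm 'I_m.+4}).
Local Notation n := m.+4.

Definition rank (k : nat) : nat := val ((p^-1)%g (inord k)).

Lemma rank_perm (t : 'I_n) : rank (p t) = t.
Proof. by rewrite /rank inord_val permK. Qed.

Lemma rank_inj i j : (i < n)%N -> (j < n)%N -> rank i = rank j -> i = j.
Proof. by move=> i_n j_n /val_inj/perm_inj/(congr1 (@nat_of_ord _)); rewrite !inordK. Qed.

Definition straddles : Prop :=
  (exists2 i, (i < m.+2)%N & (rank i < rank m.+3)%N) /\
  (exists2 i, (i < m.+2)%N & (rank m.+3 < rank i)%N).

Lemma chain_node_at q : (q < n)%N -> q != rank m.+3 -> q != rank m.+2 ->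
  exists2 i, (i < m.+2)%N & rank i = q.
Proof.
move=> qn qX qY; set j := p (inord q).
have rj : rank j = q by rewrite /j rank_perm inordK.
exists (nat_of_ord j) => //; case: (ltnP j m.+2) => // jm.
have [jY | jX] : j = m.+2 :> nat \/ j = m.+3 :> nat by have := ltn_ord j; lia.
  by move: qY; rewrite -rj jY eqxx.
by move: qX; rewrite -rj jX eqxx.
Qed.

Lemma inPnE : inPn p <-> straddles.
Proof.
split=> [Pn | [[i1 i1m lt1] [i2 i2m lt2]] x y xv yv /=].
  have := Pn (inord m.+3) (inord m.+2) (inordK (ltnSn _)) (inordK (ltnW (ltnSn _))).
  rewrite /= -/(rank m.+3) -/(rank m.+2) => Hrs.
  have rXn : (rank m.+3 < n)%N := ltn_ord _.
  split.
    have [q qX qY] : exists2 q, (q < rank m.+3)%N & q != rank m.+2.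
      by case: (eqVneq (rank m.+2) 0) => s0; [exists 1%N | exists 0%N]; lia.
    have [i im ri] := @chain_node_at q ltac:(lia) ltac:(lia) qY.
    by exists i; rewrite ?ri.
  have [q /andP[Xq qn] qY] : exists2 q, (rank m.+3 < q < n)%N & q != rank m.+2.
    by case: (eqVneq (rank m.+2) m.+3) => s3; [exists m.+2 | exists m.+3]; lia.
  have [i im ri] := @chain_node_at q qn ltac:(lia) qY.
  by exists i; rewrite ?ri.
have -> : x = inord m.+3 by apply: ord_inj; rewrite inordK //; move: xv => /=; lia.
have -> : y = inord m.+2 by apply: ord_inj; rewrite inordK //; move: yv => /=; lia.
rewrite -/(rank m.+3) -/(rank m.+2).
have rY i : (i < m.+2)%N -> rank i != rank m.+2 by move=> im; apply/eqP => /rank_inj; lia.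
have := rY _ i1m; have := rY _ i2m; have : (rank i2 < n)%N := ltn_ord _.
lia.
Qed.

Lemma balanced_straddles v : balanced m v ->
  (forall x y, (x < n)%N -> (y < n)%N -> (rank x < rank y)%N -> v y < v x) ->
  straddles.
Proof.
move=> bal dec; have rX i : (i < m.+2)%N -> rank i != rank m.+3.
  by move=> im; apply/eqP => /rank_inj; lia.
split.
  case: (boolP [exists i : 'I_m.+2, (rank i < rank m.+3)%N]) => [/existsP[i ri]|].
    by exists (nat_of_ord i).
  move/existsPn => later; suff : \sum_(0 <= i < m.+2) weight m i * v i < v m.+3.
    by rewrite -bal ltxx.
  apply: wavg_lt => i im; apply: dec; [lia | lia |].
  by have := later (Ordinal im); have := rX i im; rewrite /=; lia.
case: (boolP [exists i : 'I_m.+2, (rank m.+3 < rank i)%N]) => [/existsP[i ri]|].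
  by exists (nat_of_ord i).
move/existsPn => earlier; suff : v m.+3 < \sum_(0 <= i < m.+2) weight m i * v i.
  by rewrite -bal ltxx.
apply: wavg_gt => i im; apply: dec; [lia | lia |].
by have := earlier (Ordinal im); have := rX i im; rewrite /=; lia.
Qed.

Lemma straddles_balanced : straddles ->
  exists2 v, balanced m v & forall s t : 'I_n, t = s.+1 :> nat -> v (p t) < v (p s).
Proof.
case=> [[i1 i1m lt1] [i2 i2m lt2]]; set r := rank m.+3 in lt1 lt2 *.
pose P := \sum_(0 <= i < m.+2) weight m i * (r - rank i)%:R.
pose Q := \sum_(0 <= i < m.+2) weight m i * (rank i - r)%:R.
have P0 : 0 < P by apply: wsum_nat_gt0; exists i1; rewrite ?subn_gt0.
have Q0 : 0 < Q by apply: wsum_nat_gt0; exists i2; rewrite ?subn_gt0.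
exists (fun k => ramp (Q / P) r (rank k)); last first.
  by move=> s t ts; rewrite !rank_perm ts ramp_decreasing ?divr_gt0.
rewrite /balanced /ramp subnn mulr0 subr0.
under eq_bigr do rewrite mulrBr mulrCA.
by rewrite sumrB -mulr_sumr -/P -/Q divfK ?subrr // gt_eqF.
Qed.

End Ranks.

Lemma inPn_representable m (p : {perm 'I_m.+4}) :
  inPn p <-> representable (@Gprime m.+4) p.
Proof.
rewrite inPnE representableE; split=> [/straddles_balanced // | [v bal dec]].
apply: (balanced_straddles bal) => x y xn yn xy.
by have := ord_decreasing dec xy; rewrite !permKV !inordK.
Qed.

Local Close Scope ring_scope.

Theorem theorem8 (n : nat) (hn : 4 <= n) (p : {perm 'I_n}) :
  inPn p <-> representable (@Gprime n) p.
Proof. by case: n hn p => [|[|[|[|m]]]] // _ p; exact: inPn_representable. Qed.
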